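(* Let $\sim$ be a congruence on a finitely generated commutative monoid $Q$ and $P\subset Q$ a prime ideal. Then $P$ is an associated prime ideal of $\sim$ if and only if every primary decomposition of $\sim$ (i.e. every expression of $\sim$ as the common refinement of finitely many primary congruences) has a $P$-primary component. Moreover, if $P$ is not associated to $\sim$, then every $P$-primary component in every primary decomposition of $\sim$ is redundant: omitting it leaves another primary decomposition of $\sim$.
   Context: $Q$ is written additively with identity $0$. An element $\infty$ of a commutative monoid $M$ is \emph{nil} if $m+\infty=\infty$ for all $m$; $m$ is \emph{nilpotent} if $nm$ is nil for some $n\in\mathbb N$, \emph{cancellative} if $m+a=m+b\Rightarrow a=b$. An \emph{ideal} of $Q$ is a subset $T$ with $T+Q\subseteq T$ (empty set allowed); an ideal $P\ne Q$ is \emph{prime} if $a+b\in P\Rightarrow a\in P$ or $b\in P$; by convention $\varnothing$ is a prime ideal exactly when $Q$ has no nil. A \emph{congruence} is an equivalence relation $\sim$ on $Q$ with $a\sim b\Rightarrow a+c\sim b+c$; $\bar Q=Q/\sim$, $\bar q$ the class of $q$. Common refinement = intersection in $Q\times Q$. A congruence is \emph{primary} if every element of $\bar Q$ is nilpotent or cancellative, and then \emph{$P$-primary} for the prime $P=\{q:\bar q\text{ nilpotent}\}$. Localization: for a prime $P$, $\bar Q_P$ is the monoid of formal differences $\bar a-\bar u$ ($a\in Q$, $u\in Q\setminus P$) with $\bar a-\bar u=\bar b-\bar v$ iff $\bar w+\bar v+\bar a=\bar w+\bar u+\bar b$ in $\bar Q$ for some $w\in Q\setminus P$; elements $p\in Q$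 have images $\bar p=\bar p-\bar 0$ in $\bar Q_P$. $P$ is an \emph{associated prime ideal} of $\sim$ if the relation on $\bar Q_P$ given by $x\equiv y$ iff $x+\bar p=y+\bar p$ for all $p\in P$ is not the identity relation (for $P=\varnothing$ this relation is the universal one, so $\varnothing$ is associated iff $\bar Q_\varnothing$ has more than one element). *)

From Stdlib Require Import List.
Import ListNotations.
Set Implicit Arguments.

Record CMonoid := {
  carrier :> Type;
  add : carrier -> carrier -> carrier;
  zero : carrier;
  add_assoc : forall a b c, add a (add b c) = add (add a b) c;
  add_comm : forall a b, add a b = add b a;
  add_0l : forall a, add zero a = a
}.

Section Defs.
Context {Q : CMonoid}.
Local Notation "a + b" := (add Q a b).
Local Notation "0" := (zero Q).

Inductive generated (gens : list Q) : Q -> Prop :=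
| gen_zero : generated gens 0
| gen_in : forall g, In g gens -> generated gens g
| gen_add : forall a b, generated gens a -> generated gens b -> generated gens (a + b).

Definition fin_generated_ : Prop :=
  exists gens : list Q, forall q, generated gens q.

Fixpoint nsmul (n : nat) (q : Q) : Q :=
  match n with O => 0 | S k => q + nsmul k q end.

Definition is_nil (i : Q) : Prop := forall m, m + i = i.

Definition ideal (T : Q -> Prop) : Prop := forall a b, T a -> T (a + b).

(** Prime ideal, with the convention that the empty ideal is prime
    exactly when Q has no nil. *)
Definition prime_ideal (P : Q -> Prop) : Prop :=
  ideal P /\ (exists q, ~ P q) /\
  (forall a b, P (a + b) -> P a \/ P b) /\
  ((forall q, ~ P q) -> ~ exists i, is_nil i).

Definition congruence (R : Q -> Q -> Prop) : Prop :=
  (forall a, R a a) /\ (forall a b, R a b -> R b a) /\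
  (forall a b c, R a b -> R b c -> R a c) /\
  (forall a b c, R a b -> R (a + c) (b + c)).

(** Properties of the class of q in Q/R, expressed on representatives. *)
Definition cls_nil (R : Q -> Q -> Prop) (i : Q) : Prop := forall m, R (m + i) i.
Definition cls_nilpotent (R : Q -> Q -> Prop) (q : Q) : Prop :=
  exists n : nat, cls_nil R (nsmul n q).
Definition cls_cancellative (R : Q -> Q -> Prop) (q : Q) : Prop :=
  forall a b, R (q + a) (q + b) -> R a b.

Definition primary (R : Q -> Q -> Prop) : Prop :=
  congruence R /\ forall q, cls_nilpotent R q \/ cls_cancellative R q.

Definition P_primary (R : Q -> Q -> Prop) (P : Q -> Prop) : Prop :=
  primary R /\ forall q, P q <-> cls_nilpotent R q.

(** Equality in the localization (Q/R)_P of the formal differences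
    [a - u] and [b - v] (u, v not in P). *)
Definition loc_eq (R : Q -> Q -> Prop) (P : Q -> Prop) (a u b v : Q) : Prop :=
  exists w, ~ P w /\ R (w + v + a) (w + u + b).

(** P is associated to R: the relation x == y iff x + p = y + p for all p in P
    on (Q/R)_P is not the identity relation. *)
Definition associated (R : Q -> Q -> Prop) (P : Q -> Prop) : Prop :=
  exists a u b v, ~ P u /\ ~ P v /\
    (forall p, P p -> loc_eq R P (a + p) u (b + p) v) /\
    ~ loc_eq R P a u b v.

Definition primary_decomposition (R : Q -> Q -> Prop) (Rs : list (Q -> Q -> Prop)) : Prop :=
  (forall C, In C Rs -> primary C) /\
  (forall a b, R a b <-> (forall C, In C Rs -> C a b)).

End Defs.

Definition fin_generated (Q : CMonoid) : Prop := @fin_generated_ Q.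

From Stdlib Require Import List Arith Lia Classical ClassicalEpsilon.
Import ListNotations.

(** The proof has three parts.
    - Noetherianity (Redei's theorem): ascending chains of congruences on [Q]
      stabilize.  Writing elements as evaluations of exponent vectors in
      [N^m], the vectors that are congruent to a lexicographically smaller one
      form a monomial ideal determining the congruence; chains of monomial
      ideals stabilize by Dickson's lemma.
    - Existence of primary decompositions, by Noetherian induction: a
      non-primary congruence is the intersection of two strictly coarser ones
      (a Rees-type collapse and a colon congruence).
    - The theorem.  If [P] is associated, a component without the [P]-primary
      shape becomes injective on [(Q/R)_P] after adding elements of [P], which
      is impossible for all components at once.  If [P] is not associated, a
      descent over the generators lying in [P] shows that a [P]-primary
      component is implied by the others; deleting all of them from an
      existing decomposition yields the converse of the first statement. *)

Lemma dependent_choice {A : Type} (Inv : A -> Prop) (Step : A -> A -> Prop) (x0 : A) :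
  Inv x0 -> (forall x, Inv x -> exists y, Inv y /\ Step x y) ->
  exists f : nat -> A, forall k, Inv (f k) /\ Step (f k) (f (S k)).
Proof.
  intros H0 Hstep.
  assert (next : forall x : {x | Inv x}, {y : {x | Inv x} | Step (proj1_sig x) (proj1_sig y)}).
  { intros [x hx]. destruct (constructive_indefinite_description _ (Hstep x hx)) as [y [hy hxy]].
    exact (exist _ (exist _ y hy) hxy). }
  pose (g := fix g k := match k with 0 => exist Inv x0 H0 | S k => proj1_sig (next (g k)) end).
  exists (fun k => proj1_sig (g k)).
  intro k. split; [exact (proj2_sig (g k)) | exact (proj2_sig (next (g k)))].
Qed.

(** Exponent vectors: only the first [m] coordinates of a [vec] are relevant. *)
Definition vec := nat -> nat.
Definition vadd (a b : vec) : vec := fun k => a k + b k.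
Definition shift (a : vec) : vec := fun k => a (S k).
Definition eqv (m : nat) (a b : vec) : Prop := forall k, k < m -> a k = b k.
Definition lev (m : nat) (a b : vec) : Prop := forall k, k < m -> a k <= b k.

Definition increasing (phi : nat -> nat) : Prop := forall i, phi i < phi (S i).

Lemma increasing_lt (phi : nat -> nat) : increasing phi -> forall i j, i < j -> phi i < phi j.
Proof. intros H i j hij; induction hij; [apply H | specialize (H m); lia]. Qed.

Definition suffix_min (f : nat -> nat) (j : nat) : Prop := forall t, j <= t -> f j <= f t.

Lemma suffix_min_exists (f : nat -> nat) (i : nat) : exists j, i <= j /\ suffix_min f j.
Proof.
  assert (H : forall v j0, i <= j0 -> f j0 = v -> exists j, i <= j /\ suffix_min f j).
  { intro v; induction v as [v IH] using lt_wf_ind. intros j0 h1 h2.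
    destruct (classic (suffix_min f j0)) as [H|H]; [eauto|].
    apply not_all_ex_not in H as [t H].
    apply (IH (f t) ltac:(lia) t); [lia | reflexivity]. }
  exact (H (f i) i (le_n i) eq_refl).
Qed.

(** Every sequence of naturals has a nondecreasing subsequence
    (take successive suffix minima). *)
Lemma nondecreasing_subseq (f : nat -> nat) :
  exists psi, increasing psi /\ forall i j, i < j -> f (psi i) <= f (psi j).
Proof.
  destruct (suffix_min_exists f 0) as [j0 [_ h0]].
  destruct (dependent_choice (suffix_min f) (fun j j' => j < j') j0 h0) as [psi Hpsi].
  { intros j _. destruct (suffix_min_exists f (S j)) as [j' [h1 h2]]. exists j'; split; [exact h2 | lia]. }
  assert (Hinc : increasing psi) by (intro i; apply Hpsi).
  exists psi. split; [exact Hinc|].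
  intros i j hij. apply (proj1 (Hpsi i)). apply Nat.lt_le_incl, increasing_lt; auto.
Qed.

Lemma dickson_subseq (m : nat) (s : nat -> vec) :
  exists phi, increasing phi /\ forall i j, i < j -> lev m (s (phi i)) (s (phi j)).
Proof.
  induction m as [|m [phi [Hinc Hle]]].
  - exists (fun i => i). split; [intro; lia | intros i j _ k hk; lia].
  - destruct (nondecreasing_subseq (fun i => s (phi i) m)) as [psi [Hinc' Hle']].
    exists (fun i => phi (psi i)). split.
    + intro i; apply increasing_lt; auto.
    + intros i j hij k hk.
      destruct (Nat.lt_ge_cases k m) as [hkm|hkm].
      * apply Hle; [apply increasing_lt|]; auto.
      * replace k with m by lia. apply Hle'; auto.
Qed.

Lemma dickson (m : nat) (s : nat -> vec) : exists i j, i < j /\ lev m (s i) (s j).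
Proof.
  destruct (dickson_subseq m s) as [phi [Hinc Hle]].
  exists (phi 0), (phi 1). split; [apply Hinc | apply Hle; lia].
Qed.

Lemma monomial_ideal_chain_stabilizes (m : nat) (J : nat -> vec -> Prop) :
  (forall k a, J k a -> J (S k) a) ->
  (forall k a b, J k a -> lev m a b -> J k b) ->
  exists K, forall k, K <= k -> forall a, J k a -> J K a.
Proof.
  intros Hmon Hup.
  assert (Hmon' : forall k k', k <= k' -> forall a, J k a -> J k' a)
    by (intros k k' h; induction h; auto).
  apply NNPP; intro Hn.
  (* otherwise every stage is exceeded by a later one containing a new vector *)
  pose (Grow := fun Ka Ka' : nat * vec =>
    fst Ka <= fst Ka' /\ J (fst Ka') (snd Ka') /\ ~ J (fst Ka) (snd Ka')).
  destruct (dependent_choice (fun _ => True) Grow (0, fun _ => 0) I) as [f Hf].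
  { intros Ka _. apply NNPP; intro H. apply Hn. exists (fst Ka). intros k hk a ha.
    apply NNPP; intro hna. apply H. exists (k, a). repeat split; auto. }
  assert (Hstages : forall i j, i <= j -> fst (f i) <= fst (f j)).
  { intros i j h; induction h as [|j h IH]; [lia|]. destruct (Hf j) as [_ [? _]]; lia. }
  destruct (dickson m (fun j => snd (f (S j)))) as [i [j [hij hle]]].
  destruct (Hf i) as [_ [_ [Hi _]]]. destruct (Hf j) as [_ [_ [_ Hj]]].
  apply Hj, (Hup _ (snd (f (S i)))); [|exact hle].
  apply (Hmon' (fst (f (S i)))); [apply Hstages; lia | exact Hi].
Qed.

Fixpoint lexlt (m : nat) (a b : vec) : Prop :=
  match m with
  | 0 => False
  | S m' => a 0 < b 0 \/ (a 0 = b 0 /\ lexlt m' (shift a) (shift b))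
  end.

Lemma lexlt_add (m : nat) (a b c : vec) : lexlt m a b -> lexlt m (vadd a c) (vadd b c).
Proof.
  revert a b c; induction m; simpl; auto.
  intros a b c [H|[H1 H2]]; [left; unfold vadd; lia | right].
  split; [unfold vadd; lia | exact (IHm _ _ (shift c) H2)].
Qed.

Lemma lexlt_eqv (m : nat) (a a' b b' : vec) :
  eqv m a a' -> eqv m b b' -> lexlt m a b -> lexlt m a' b'.
Proof.
  revert a a' b b'; induction m; simpl; auto.
  intros a a' b b' Ha Hb H.
  rewrite <- (Ha 0), <- (Hb 0) by lia.
  destruct H as [H|[H1 H2]]; [left; exact H | right; split; [exact H1|]].
  apply (IHm (shift a) _ (shift b)); auto; intros k hk; [apply Ha | apply Hb]; lia.
Qed.

Lemma lexlt_trichotomy (m : nat) (a b : vec) : lexlt m a b \/ lexlt m b a \/ eqv m a b.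
Proof.
  revert a b; induction m; intros a b; simpl.
  - right; right; intros k hk; lia.
  - destruct (lt_eq_lt_dec (a 0) (b 0)) as [[H|H]|H]; auto.
    destruct (IHm (shift a) (shift b)) as [H1|[H1|H1]]; auto.
    right; right. intros [|k] hk; auto. apply H1; lia.
Qed.

Lemma lexlt_wf (m : nat) : well_founded (lexlt m).
Proof.
  induction m.
  - intros a; constructor; intros b [].
  - intros a. remember (a 0) as n0 eqn:E. revert a E.
    induction n0 as [n0 IHo] using lt_wf_ind. intros a E.
    remember (shift a) as t eqn:Et. revert a E Et.
    induction (IHm t) as [t _ IHi]. intros a E Et.
    constructor. intros b [H|[H1 H2]].
    + apply (IHo (b 0)); [lia | reflexivity].
    + apply (IHi (shift b)); [subst t; exact H2 | lia | reflexivity].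
Qed.

Local Notation "a +' b" := (add _ a b) (at level 50, left associativity).

Section Monoid.
Variable Q : CMonoid.
Local Notation "0'" := (zero Q).

Lemma addA (a b c : Q) : a +' (b +' c) = a +' b +' c.
Proof. apply add_assoc. Qed.
Lemma addC (a b : Q) : a +' b = b +' a.
Proof. apply add_comm. Qed.
Lemma add0l (a : Q) : 0' +' a = a.
Proof. apply add_0l. Qed.
Lemma add0r (a : Q) : a +' 0' = a.
Proof. rewrite addC; apply add0l. Qed.
Lemma addAC (a b c : Q) : a +' b +' c = a +' c +' b.
Proof. rewrite <- addA, (addC b c), addA; reflexivity. Qed.
Lemma addACA (a b c d : Q) : (a +' b) +' (c +' d) = (a +' c) +' (b +' d).
Proof. rewrite !addA, (addAC a b c); reflexivity. Qed.

Lemma nsmul_add (m n : nat) (g : Q) : nsmul (m + n) g = nsmul m g +' nsmul n g.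
Proof. induction m; simpl; [now rewrite add0l | now rewrite IHm, addA]. Qed.

Lemma cong_addl (R : Q -> Q -> Prop) (c a b : Q) : congruence R -> R a b -> R (c +' a) (c +' b).
Proof. intros [_ [_ [_ H]]] h. rewrite (addC c a), (addC c b). apply H, h. Qed.

Fixpoint evalL (l : list Q) (v : vec) : Q :=
  match l with
  | [] => 0'
  | g :: l' => nsmul (v 0) g +' evalL l' (shift v)
  end.

Lemma evalL_eqv (l : list Q) (a b : vec) : eqv (length l) a b -> evalL l a = evalL l b.
Proof.
  revert a b; induction l as [|g l IH]; intros a b H; simpl; auto.
  rewrite (H 0) by (simpl; lia). f_equal. apply IH.
  intros k hk; apply H; simpl; lia.
Qed.

Lemma evalL_add (l : list Q) (a b : vec) : evalL l (vadd a b) = evalL l a +' evalL l b.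
Proof.
  revert a b; induction l as [|g l IH]; intros a b; simpl.
  - now rewrite add0l.
  - unfold vadd at 1. rewrite nsmul_add.
    change (shift (vadd a b)) with (vadd (shift a) (shift b)).
    rewrite IH. apply addACA.
Qed.

Lemma evalL_zero (l : list Q) : evalL l (fun _ => 0) = 0'.
Proof. induction l; simpl; [reflexivity | rewrite add0l; exact IHl]. Qed.

Lemma evalL_surj (l : list Q) (q : Q) : generated l q -> exists v, evalL l v = q.
Proof.
  induction 1 as [|g Hg|a b _ [va Ha] _ [vb Hb]].
  - exists (fun _ => 0). apply evalL_zero.
  - induction l as [|h l IH]; [destruct Hg|].
    destruct Hg as [<-|Hg].
    + exists (fun k => match k with 0 => 1 | _ => 0 end). simpl.
      unfold shift; simpl. rewrite evalL_zero, !add0r. reflexivity.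
    + destruct (IH Hg) as [v Hv].
      exists (fun k => match k with 0 => 0 | S k => v k end). simpl.
      rewrite add0l. exact Hv.
  - exists (vadd va vb). rewrite evalL_add, Ha, Hb; reflexivity.
Qed.

Definition strictly_coarser (r s : Q -> Q -> Prop) : Prop :=
  (forall x y, r x y -> s x y) /\ exists x y, s x y /\ ~ r x y.

Definition colon (rho : Q -> Q -> Prop) (x : Q) : Q -> Q -> Prop :=
  fun a b => rho (x +' a) (x +' b).

Lemma colon_congruence (rho : Q -> Q -> Prop) (x : Q) :
  congruence rho -> congruence (colon rho x).
Proof.
  intros [R1 [R2 [R3 R4]]]. unfold colon.
  repeat split; intros; eauto. rewrite !addA. apply R4; assumption.
Qed.

Lemma colon_mono (rho : Q -> Q -> Prop) (x y a b : Q) :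
  congruence rho -> colon rho x a b -> colon rho (y +' x) a b.
Proof. intros Hc h. unfold colon. rewrite <- !addA. apply cong_addl; assumption. Qed.

(** The Rees-type congruence collapsing the [rho]-saturated ideal generated
    by [x] to a single class. *)
Definition in_ideal_of (rho : Q -> Q -> Prop) (x a : Q) : Prop := exists c, rho a (x +' c).

Definition collapse (rho : Q -> Q -> Prop) (x : Q) : Q -> Q -> Prop :=
  fun a b => rho a b \/ (in_ideal_of rho x a /\ in_ideal_of rho x b).

Lemma collapse_congruence (rho : Q -> Q -> Prop) (x : Q) :
  congruence rho -> congruence (collapse rho x).
Proof.
  intros [R1 [R2 [R3 R4]]]. unfold collapse, in_ideal_of.
  split; [|split; [|split]].
  - left; auto.
  - intros a b [h|[ha hb]]; [left; auto | right; auto].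
  - intros a b c [h|[[c1 h1] [c2 h2]]] [h'|[[c3 h3] [c4 h4]]].
    + left; eauto.
    + right; split; [exists c3; eauto | exists c4; auto].
    + right; split; [exists c1; auto | exists c2; eauto].
    + right; split; [exists c1 | exists c4]; auto.
  - intros a b c [h|[[c1 h1] [c2 h2]]]; [left; auto | right].
    split; [exists (c1 +' c) | exists (c2 +' c)]; rewrite addA; apply R4; assumption.
Qed.

Lemma collapse_colon_intersection (rho : Q -> Q -> Prop) (x a b : Q) :
  congruence rho -> (forall c d, colon rho (x +' x) c d -> colon rho x c d) ->
  collapse rho x a b -> colon rho x a b -> rho a b.
Proof.
  intros Hc Hstable [h|[[c1 h1] [c2 h2]]] hab; [exact h|].
  pose proof Hc as [_ [R2 [R3 _]]].
  assert (Hc12 : colon rho x c1 c2).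
  { apply Hstable. unfold colon. rewrite <- !addA.
    apply (R3 _ (x +' a)); [apply R2, cong_addl; auto|].
    apply (R3 _ (x +' b)); [exact hab | apply cong_addl; auto]. }
  apply (R3 _ (x +' c1)); [exact h1|]. apply (R3 _ (x +' c2)); [exact Hc12 | apply R2, h2].
Qed.

Section FinitelyGenerated.
Variable gens : list Q.
Hypothesis Hgens : forall q, generated gens q.

Let m := length gens.
Let ev := evalL gens.

(** The reducible vectors
    form a monomial ideal, and they determine [rho] among coarser congruences. *)
Definition reducible (rho : Q -> Q -> Prop) (a : vec) : Prop :=
  exists b, lexlt m b a /\ rho (ev a) (ev b).

Lemma reducible_upward (rho : Q -> Q -> Prop) (a a' : vec) :
  congruence rho -> reducible rho a -> lev m a a' -> reducible rho a'.
Proof.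
  intros Hc [b [hlt hab]] hle.
  set (c := fun i => a' i - a i).
  assert (He : eqv m (vadd a c) a') by (intros i hi; unfold vadd, c; specialize (hle i hi); lia).
  exists (vadd b c). split.
  - apply (lexlt_eqv m (vadd b c) _ (vadd a c)); [intros i hi; reflexivity | exact He |].
    apply lexlt_add; exact hlt.
  - unfold ev. rewrite <- (evalL_eqv gens _ _ He), !evalL_add.
    destruct Hc as [_ [_ [_ H4]]]. apply H4, hab.
Qed.

Lemma normal_form_exists (rho : Q -> Q -> Prop) (a : vec) :
  congruence rho -> exists a', rho (ev a) (ev a') /\ ~ reducible rho a'.
Proof.
  intros [R1 [_ [R3 _]]].
  induction a as [a IH] using (well_founded_ind (lexlt_wf m)).
  destruct (classic (reducible rho a)) as [[b [h1 h2]]|H].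
  - destruct (IH b h1) as [b' [h3 h4]]. exists b'; split; eauto.
  - exists a; split; auto.
Qed.

(** A coarser congruence with no more reducible vectors coincides with the
    finer one: both have the same normal forms. *)
Lemma coarser_same_reducible (rho sigma : Q -> Q -> Prop) :
  congruence rho -> congruence sigma -> (forall x y, rho x y -> sigma x y) ->
  (forall a, reducible sigma a -> reducible rho a) ->
  forall x y, sigma x y -> rho x y.
Proof.
  intros Hrho Hsig Hsub Hred x y hxy.
  pose proof Hrho as [R1 [R2 [R3 _]]]. pose proof Hsig as [_ [S2 [S3 _]]].
  destruct (evalL_surj gens x (Hgens x)) as [a <-].
  destruct (evalL_surj gens y (Hgens y)) as [b <-].
  destruct (normal_form_exists rho a Hrho) as [a' [Ha Ha']].
  destruct (normal_form_exists rho b Hrho) as [b' [Hb Hb']].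
  (* the normal forms of [a] and [b] are [sigma]-equivalent, so neither is
     lexicographically smaller than the other *)
  assert (Hab : sigma (ev a') (ev b')) by eauto 6.
  destruct (lexlt_trichotomy m a' b') as [H|[H|H]].
  - exfalso; apply Hb', Hred. exists a'; split; auto.
  - exfalso; apply Ha', Hred. exists b'; split; auto.
  - apply (R3 _ (ev a')); [exact Ha|]. apply (R3 _ (ev b')); [|auto].
    unfold ev; rewrite (evalL_eqv gens a' b' H); auto.
Qed.

Lemma congruence_chain_stabilizes (rho : nat -> Q -> Q -> Prop) :
  (forall k, congruence (rho k)) -> (forall k x y, rho k x y -> rho (S k) x y) ->
  exists K, forall k, K <= k -> forall x y, rho k x y -> rho K x y.
Proof.
  intros Hc Hmon.
  assert (Hmon' : forall k k', k <= k' -> forall x y, rho k x y -> rho k' x y)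
    by (intros k k' h; induction h; auto).
  destruct (monomial_ideal_chain_stabilizes m (fun k => reducible (rho k))) as [K HK].
  - intros k a [b [h1 h2]]. exists b; auto.
  - intros k a a' h hl. apply (reducible_upward _ a); auto.
  - exists K. intros k hk. apply coarser_same_reducible; auto.
    + apply Hmon'; exact hk.
    + apply HK; exact hk.
Qed.

(** A congruence that is not primary is the intersection of two strictly
    coarser congruences: for [q] neither nilpotent nor cancellative and [N]
    a stage where the chain [(rho : kq)] stabilizes, take the collapse of
    the ideal of [Nq] and the colon [(rho : Nq)]. *)
Lemma split_nonprimary (rho : Q -> Q -> Prop) :
  congruence rho -> ~ primary rho ->
  exists r1 r2, congruence r1 /\ congruence r2 /\
    strictly_coarser rho r1 /\ strictly_coarser rho r2 /\
    (forall a b, r1 a b -> r2 a b -> rho a b).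
Proof.
  intros Hc Hnp.
  assert (exists q, ~ cls_nilpotent rho q /\ ~ cls_cancellative rho q) as [q [Hn Hcn]].
  { apply NNPP; intro H. apply Hnp. split; [exact Hc|].
    intro q. apply NNPP; intro H'. apply H. exists q. tauto. }
  destruct (congruence_chain_stabilizes (fun k => colon rho (nsmul k q))) as [N HN].
  - intro k; apply colon_congruence, Hc.
  - intros k a b; apply colon_mono, Hc.
  - pose proof Hc as [R1 _].
    set (x := nsmul N q) in HN.
    exists (collapse rho x), (colon rho x).
    split; [apply collapse_congruence, Hc|]. split; [apply colon_congruence, Hc|].
    split; [|split].
    + (* [x] is not nil for [rho], yet the collapse identifies it with all its multiples *)
      split; [intros a b h; left; exact h|].
      apply NNPP; intro H. apply Hn. exists N. intro c.
      apply NNPP; intro H'. apply H. exists (c +' x), x. split; [|exact H'].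
      right. split; [exists c; rewrite (addC x c) | exists 0'; rewrite add0r]; apply R1.
    + (* a relation cancelled by [q] becomes valid in the colon *)
      split; [intros a b h; unfold colon; apply cong_addl; assumption|].
      apply NNPP; intro H. apply Hcn. intros a b h.
      apply NNPP; intro H'. apply H. exists a, b. split; [|exact H'].
      apply (HN (S N)); [lia|]. unfold colon. simpl. fold x.
      rewrite (addC q x), <- !addA. apply cong_addl; assumption.
    + intros a b. apply collapse_colon_intersection; [exact Hc|].
      intros c d h. apply (HN (N + N)); [lia|]. rewrite nsmul_add. exact h.
Qed.

Lemma congruence_ind (Pr : (Q -> Q -> Prop) -> Prop) :
  (forall r, congruence r -> (forall s, congruence s -> strictly_coarser r s -> Pr s) -> Pr r) ->
  forall r, congruence r -> Pr r.
Proof.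
  intros Hind r0 Hr0. apply NNPP; intro Hn0.
  destruct (dependent_choice (fun r => congruence r /\ ~ Pr r) strictly_coarser r0 (conj Hr0 Hn0))
    as [rho Hrho].
  { intros r [Hr Hnr]. apply NNPP; intro H. apply Hnr, Hind; [exact Hr|].
    intros s Hs Hrs. apply NNPP; intro Hns. apply H. exists s; auto. }
  destruct (congruence_chain_stabilizes rho) as [K HK].
  - intro k; apply (proj1 (proj1 (Hrho k))).
  - intro k; apply (proj1 (proj2 (Hrho k))).
  - destruct (proj2 (proj2 (Hrho K))) as [x [y [h1 h2]]].
    apply h2, (HK (S K)); auto.
Qed.

Lemma decomposition_app (rho r1 r2 : Q -> Q -> Prop) (Rs1 Rs2 : list (Q -> Q -> Prop)) :
  (forall x y, rho x y -> r1 x y) -> (forall x y, rho x y -> r2 x y) ->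
  (forall x y, r1 x y -> r2 x y -> rho x y) ->
  primary_decomposition r1 Rs1 -> primary_decomposition r2 Rs2 ->
  primary_decomposition rho (Rs1 ++ Rs2).
Proof.
  intros H1 H2 H3 [P1 E1] [P2 E2]. split.
  - intros C hC. apply in_app_or in hC as [hC|hC]; auto.
  - intros a b; split.
    + intros h C hC. apply in_app_or in hC as [hC|hC];
        [apply (proj1 (E1 a b)) | apply (proj1 (E2 a b))]; auto.
    + intros h. apply H3;
        [apply (proj2 (E1 a b)) | apply (proj2 (E2 a b))]; intros C hC; apply h, in_or_app; auto.
Qed.

Lemma primary_decomposition_exists (R : Q -> Q -> Prop) :
  congruence R -> exists Rs, primary_decomposition R Rs.
Proof.
  revert R. apply (congruence_ind (fun R => exists Rs, primary_decomposition R Rs)). intros r Hr IH.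
  destruct (classic (primary r)) as [Hp|Hnp].
  - exists [r]. split; [intros C [<-|[]]; exact Hp|].
    intros a b; split; [intros h C [<-|[]]; exact h | intro h; apply h; left; reflexivity].
  - destruct (split_nonprimary r Hr Hnp) as [r1 [r2 [c1 [c2 [sc1 [sc2 Hint]]]]]].
    destruct (IH r1 c1 sc1) as [Rs1 D1]. destruct (IH r2 c2 sc2) as [Rs2 D2].
    exists (Rs1 ++ Rs2). apply (decomposition_app r r1 r2); [apply sc1 | apply sc2 | ..]; auto.
Qed.
End FinitelyGenerated.
End Monoid.

Arguments addA {Q}. Arguments addC {Q}. Arguments add0l {Q}. Arguments add0r {Q}.
Arguments addAC {Q}.

Section AssociatedPrimes.
Variable Q : CMonoid.
Local Notation "0'" := (zero Q).
Variable P : Q -> Prop.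
Hypothesis HP : prime_ideal P.

Lemma prime_not_zero : ~ P 0'.
Proof. destruct HP as [Hi [[q Hq] _]]. intro H0. apply Hq. rewrite <- (add0l q). apply Hi, H0. Qed.

Lemma prime_compl_add (a b : Q) : ~ P a -> ~ P b -> ~ P (a +' b).
Proof. destruct HP as [_ [_ [Hp _]]]. intros ha hb h. destruct (Hp a b h); auto. Qed.

Lemma prime_compl_nsmul (n : nat) (x : Q) : ~ P x -> ~ P (nsmul n x).
Proof.
  intro hx; induction n; simpl; [apply prime_not_zero | apply prime_compl_add; assumption].
Qed.

Lemma prime_generator_summand (gens : list Q) (p : Q) :
  generated gens p -> P p -> exists g r, In g gens /\ P g /\ p = g +' r.
Proof.
  induction 1 as [|g Hg|a b _ IHa _ IHb]; intro h.
  - exfalso; exact (prime_not_zero h).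
  - exists g, 0'. rewrite add0r; auto.
  - destruct HP as [_ [_ [Hp _]]]. destruct (Hp a b h) as [ha|hb].
    + destruct (IHa ha) as [g [r [h1 [h2 ->]]]]. exists g, (r +' b). rewrite addA; auto.
    + destruct (IHb hb) as [g [r [h1 [h2 ->]]]]. exists g, (r +' a). rewrite addC, addA; auto.
Qed.

Lemma common_witness (Rs : list (Q -> Q -> Prop)) (X Y : Q) :
  (forall C, In C Rs -> congruence C) ->
  (forall C, In C Rs -> exists w, ~ P w /\ C (w +' X) (w +' Y)) ->
  exists w, ~ P w /\ forall C, In C Rs -> C (w +' X) (w +' Y).
Proof.
  induction Rs as [|C Rs IH]; intros Hc H.
  - exists 0'. split; [apply prime_not_zero | intros _ []].
  - destruct (H C (or_introl eq_refl)) as [w1 [hw1 h1]].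
    destruct IH as [w2 [hw2 h2]]; [intros; apply Hc; right; assumption | intros; apply H; right; assumption|].
    exists (w1 +' w2). split; [apply prime_compl_add; assumption|].
    intros D [<-|hD].
    + rewrite !(addAC w1 w2). apply (Hc C (or_introl eq_refl)), h1.
    + rewrite (addC w1 w2), !(addAC w2 w1). apply (Hc D (or_intror hD)), h2, hD.
Qed.

Lemma nil_equates (C : Q -> Q -> Prop) (w X Y : Q) :
  congruence C -> cls_nil C w -> C (w +' X) (w +' Y).
Proof.
  intros [_ [C2 [C3 _]]] hw. apply (C3 _ w); rewrite addC; [apply hw | apply C2, hw].
Qed.

Lemma not_P_primary_cases (C : Q -> Q -> Prop) :
  primary C -> ~ P_primary C P ->
  (exists x, cls_nilpotent C x /\ ~ P x) \/ (exists p, P p /\ cls_cancellative C p).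
Proof.
  intros Hp Hn. apply NNPP; intro H. apply Hn. split; [exact Hp|].
  intro q; split; intro h.
  - destruct (proj2 Hp q) as [Hq|Hq]; [exact Hq|]. exfalso; apply H; right; eauto.
  - apply NNPP; intro h'. apply H; left; eauto.
Qed.

(** Otherwise each component has
    a nilpotent element outside [P] or cancels some element of [P]; either way
    it relates the two sides of the associatedness witness up to a
    denominator outside [P], and a common denominator contradicts the
    witness. *)
Lemma associated_has_P_primary_component (R : Q -> Q -> Prop) :
  associated R P -> forall Rs, primary_decomposition R Rs -> exists C, In C Rs /\ P_primary C P.
Proof.
  intros [a [u [b [v [hu [hv [Hall Hn]]]]]]] Rs [Hpr HE].
  apply NNPP; intro Hno. apply Hn.
  destruct (common_witness Rs (v +' a) (u +' b)) as [w [hw Hw]].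
  - intros C hC; apply Hpr, hC.
  - intros C hC.
    assert (hCP : ~ P_primary C P) by (intro h; apply Hno; exists C; split; assumption).
    destruct (not_P_primary_cases C (Hpr C hC) hCP) as [[x [[n hn] hx]]|[p [hp Hcan]]].
    + exists (nsmul n x). split; [apply prime_compl_nsmul, hx | apply nil_equates, hn; apply Hpr, hC].
    + destruct (Hall p hp) as [w [hw Hw]]. exists w. split; [exact hw|].
      apply Hcan. rewrite !(addC p), <- !addA. rewrite <- !addA in Hw.
      apply (proj1 (HE _ _) Hw), hC.
  - exists w. split; [exact hw|]. rewrite <- !addA. apply (proj2 (HE _ _)), Hw.
Qed.

Lemma loc_eq_add (R : Q -> Q -> Prop) (a u b v c : Q) :
  congruence R -> loc_eq R P a u b v -> loc_eq R P (a +' c) u (b +' c) v.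
Proof.
  intros [_ [_ [_ R4]]] [w [hw h]]. exists w. split; [exact hw|]. rewrite !addA. apply R4, h.
Qed.

Lemma ideal_contains_zero (L : list Q) (Sel : Q -> Prop) (G : Q -> Prop) :
  ideal G -> (forall g, In g L -> Sel g -> exists N, G (nsmul N g)) ->
  (forall x, (forall g, In g L -> Sel g -> G (x +' g)) -> G x) -> G 0'.
Proof.
  revert G; induction L as [|g L IH]; intros G Gi Gn Gc.
  - apply Gc. intros _ [].
  - destruct (classic (Sel g)) as [hg|hg].
    2: { apply IH; [exact Gi | intros; apply Gn; [right|]; assumption |].
         intros x hx. apply Gc. intros g' [<-|hg']; [contradiction | apply hx; assumption]. }
    (* lower the multiple of [g] one step at a time, using [L] for the rest *)
    assert (Hdown : forall k, G (nsmul (S k) g) -> G (nsmul k g)).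
    { intros k hk. rewrite <- (add0l (nsmul k g)).
      apply (IH (fun y => G (y +' nsmul k g))).
      - intros y z h. rewrite addAC. apply Gi, h.
      - intros g' hg' hs. destruct (Gn g' (or_intror hg') hs) as [N hN]. exists N. apply Gi, hN.
      - intros y hy. apply Gc. intros g' [<-|hg'] hs.
        + rewrite <- addA, (addC (nsmul k g) g), (addC y). apply Gi, hk.
        + rewrite addAC. apply hy; assumption. }
    destruct (Gn g (or_introl eq_refl) hg) as [N hN].
    assert (Hall : forall k, G (nsmul k g) -> G 0') by (intro k; induction k; auto).
    exact (Hall N hN).
Qed.

Lemma drop_implied_component (R C : Q -> Q -> Prop) (Rs1 Rs2 : list (Q -> Q -> Prop)) :
  primary_decomposition R (Rs1 ++ C :: Rs2) ->
  (forall a b, (forall D, In D (Rs1 ++ Rs2) -> D a b) -> C a b) ->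
  primary_decomposition R (Rs1 ++ Rs2).
Proof.
  intros [Hpr HE] Himp.
  assert (Hin : forall D, In D (Rs1 ++ C :: Rs2) <-> In D (Rs1 ++ Rs2) \/ D = C).
  { intro D; rewrite !in_app_iff; simpl; intuition. }
  split.
  - intros D hD. apply Hpr, Hin; left; exact hD.
  - intros a b; split.
    + intros h D hD. apply (proj1 (HE a b) h), Hin; left; exact hD.
    + intros h. apply (proj2 (HE a b)). intros D hD.
      apply Hin in hD as [hD| ->]; [apply h, hD | apply Himp, h].
Qed.

(** Given [a, b] related by the others,
    the set of [x] with [a + x = b + x] in [(Q/R)_P] is an ideal containing a
    multiple of every generator in [P]; non-associatedness makes it closed
    under removing such generators, so it contains [0], and cancelling the
    denominator (not nilpotent, hence cancellative for [C]) gives [C a b]. *)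
Lemma P_primary_component_implied (gens : list Q) (R C : Q -> Q -> Prop)
  (Rs1 Rs2 : list (Q -> Q -> Prop)) :
  (forall q, generated gens q) -> congruence R -> ~ associated R P ->
  primary_decomposition R (Rs1 ++ C :: Rs2) -> P_primary C P ->
  forall a b, (forall D, In D (Rs1 ++ Rs2) -> D a b) -> C a b.
Proof.
  intros Hgens HR Hna [Hpr HE] [HCp HCP] a b Hab.
  assert (Hin : forall D, In D (Rs1 ++ C :: Rs2) <-> In D (Rs1 ++ Rs2) \/ D = C).
  { intro D; rewrite !in_app_iff; simpl; intuition. }
  set (G := fun x => loc_eq R P (a +' x) 0' (b +' x) 0').
  assert (G0 : G 0').
  { apply (ideal_contains_zero gens P).
    - intros x y h. unfold G. rewrite !addA. apply loc_eq_add; assumption.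
    - (* a multiple of [g] is nil for [C] and the other components relate [a], [b] *)
      intros g _ hg. destruct (proj1 (HCP g) hg) as [N hN]. exists N.
      exists 0'. split; [apply prime_not_zero|]. rewrite !add0l.
      apply (proj2 (HE _ _)). intros D hD. apply Hin in hD as [hD| ->].
      + apply (Hpr D (proj2 (Hin D) (or_introl hD))), Hab, hD.
      + destruct HCp as [[_ [C2 [C3 _]]] _].
        apply (C3 _ (nsmul N g)); [apply hN | apply C2, hN].
    - (* otherwise [(a + x) - 0] and [(b + x) - 0] witness that [P] is associated *)
      intros x Hx. apply NNPP; intro Hn. apply Hna.
      exists (a +' x), 0', (b +' x), 0'.
      split; [apply prime_not_zero|]. split; [apply prime_not_zero|]. split; [|exact Hn].
      intros p hp. destruct (prime_generator_summand gens p (Hgens p) hp) as [g [r [h1 [h2 ->]]]].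
      rewrite !addA. apply loc_eq_add; [exact HR|]. rewrite <- !addA. apply Hx; assumption. }
  destruct G0 as [w [hw h]].
  assert (hC : C (w +' 0' +' (a +' 0')) (w +' 0' +' (b +' 0'))) by (apply (proj1 (HE _ _) h), Hin; auto).
  rewrite !add0r in hC.
  destruct (proj2 HCp w) as [hn|hc]; [exfalso; apply hw, HCP, hn | apply hc, hC].
Qed.

Lemma P_primary_component_redundant (gens : list Q) (R : Q -> Q -> Prop) :
  (forall q, generated gens q) -> congruence R -> ~ associated R P ->
  forall Rs1 C Rs2, primary_decomposition R (Rs1 ++ C :: Rs2) ->
  P_primary C P -> primary_decomposition R (Rs1 ++ Rs2).
Proof.
  intros Hgens HR Hna Rs1 C Rs2 Hd HC.
  apply (drop_implied_component R C); [exact Hd|].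
  apply (P_primary_component_implied gens R C Rs1 Rs2); assumption.
Qed.

Lemma decomposition_without_P_primary (R : Q -> Q -> Prop) :
  (forall Rs1 C Rs2, primary_decomposition R (Rs1 ++ C :: Rs2) ->
     P_primary C P -> primary_decomposition R (Rs1 ++ Rs2)) ->
  forall Rs2 Rs1, (forall C, In C Rs1 -> ~ P_primary C P) ->
  primary_decomposition R (Rs1 ++ Rs2) ->
  exists Rs, primary_decomposition R Rs /\ forall C, In C Rs -> ~ P_primary C P.
Proof.
  intros Hred. induction Rs2 as [|C Rs2 IH]; intros Rs1 H1 Hd.
  - rewrite app_nil_r in Hd. eauto.
  - destruct (classic (P_primary C P)) as [hC|hC].
    + apply (IH Rs1); [exact H1 | apply (Hred Rs1 C Rs2); assumption].
    + apply (IH (Rs1 ++ [C])).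
      * intros D hD. apply in_app_or in hD as [hD|[<-|[]]]; auto.
      * rewrite <- app_assoc. exact Hd.
Qed.
End AssociatedPrimes.

(** Theorem 4.12.  The forward direction and the redundancy statement are the
    two halves proved above; for the backward direction, if [P] were not
    associated, removing all [P]-primary components from an existing primary
    decomposition would give one without any. *)
Theorem theorem4p12 (Q : CMonoid) (hfg : fin_generated Q)
  (R : Q -> Q -> Prop) (hR : congruence R)
  (P : Q -> Prop) (hP : prime_ideal P) :
  (associated R P <->
     (forall Rs, primary_decomposition R Rs ->
        exists C, In C Rs /\ P_primary C P)) /\
  (~ associated R P ->
     forall Rs1 C Rs2, primary_decomposition R (Rs1 ++ C :: Rs2) ->
       P_primary C P -> primary_decomposition R (Rs1 ++ Rs2)).
Proof.
  destruct hfg as [gens Hgens].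
  split; [split|].
  - apply associated_has_P_primary_component, hP.
  - intros Hall. apply NNPP; intro Hna.
    destruct (primary_decomposition_exists Q gens Hgens R hR) as [Rs0 HRs0].
    destruct (decomposition_without_P_primary Q P R
                (P_primary_component_redundant Q P hP gens R Hgens hR Hna) Rs0 [])
      as [Rs [HRs Hno]]; [intros _ [] | exact HRs0 |].
    destruct (Hall Rs HRs) as [C [hC hCP]]. exact (Hno C hC hCP).
  - apply P_primary_component_redundant with gens; assumption.
Qed.
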